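(* For all closed terms $t_0,t_1$ of $\lambda_S$, if $t_0\equiv t_1$ then $t_0\approx_{\emptyset}t_1$.
   Context: Terms of $\lambda_S$: $t ::= x \mid \lambda x.t \mid t\,t \mid \mathcal{S}k.t \mid \langle t\rangle$ (shift $\mathcal{S}k.t$ binds $k$, reset $\langle t\rangle$), up to $\alpha$-conversion; closed means no free variables. Values: $v ::= \lambda x.t$. Pure contexts $E ::= \Box \mid v\,E \mid E\,t$; evaluation contexts $F ::= \Box \mid v\,F \mid F\,t \mid \langle F\rangle$; contexts $C ::= \Box \mid \lambda x.C \mid t\,C \mid C\,t \mid \mathcal{S}k.C \mid \langle C\rangle$. Reduction: $F[(\lambda x.t)\,v] \to F[t\{v/x\}]$; $F[\langle E[\mathcal{S}k.t]\rangle] \to F[\langle t\{\lambda x.\langle E[x]\rangle/k\}\rangle]$ ($x\notin\mathrm{fv}(E)$); $F[\langle v\rangle]\to F[v]$. $\to^*$ reflexive-transitive closure; $t\Downarrow t'$ means $t\to^*t'$ with $t'$ irreducible. Stuck: not a value and irreducible; normal form: value or stuck term. Closures: for $R$ a relation on closed terms, $\widetilde R$ is the smallest relation containing $R$, all $(x,x)$, and closed under all term constructors, restricted to closed terms; $\widehat R$ is the smallest relation on closed evaluation contexts with $\Box\widehat R\Box$, $v_0F_0\widehat Rv_1F_1$ if $F_0\widehat RF_1,v_0\widetilde Rv_1$; $F_0t_0\widehat RF_1t_1$ if $F_0\widehat RF_1,t_0\widetilde Rt_1$; $\langle F_0\rangle\widehat R\langle F_1\rangle$ if $F_0\widehat RF_1$.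 Environmental bisimilarity: an environment $\mathcal E$ is a relation on closed normal forms relating values only with values and stuck terms only with stuck terms. An environmental relation $\mathcal X$ is a set of environments and triples $(\mathcal E,t_0,t_1)$ with $t_0,t_1$ closed, written $t_0\,\mathcal X_{\mathcal E}\,t_1$. $\mathcal X$ is an environmental bisimulation if (1) whenever $t_0\mathcal X_{\mathcal E}t_1$: (a) $t_0\to t_0'$ implies $t_1\to^*t_1'$ with $t_0'\mathcal X_{\mathcal E}t_1'$; (b) if $t_0$ is a value $v_0$ then $t_1\to^*v_1$, a value, and $\mathcal E\cup\{(v_0,v_1)\}\in\mathcal X$; (c) if $t_0$ is stuck then $t_1\to^*t_1'$ stuck and $\mathcal E\cup\{(t_0,t_1')\}\in\mathcal X$; (d) symmetric conditions for $t_1$; (2) whenever $\mathcal E\in\mathcal X$: (a) $(\lambda x.t_0)\mathcal E(\lambda x.t_1)$ and $v_0\widetilde{\mathcal E}v_1$ imply $t_0\{v_0/x\}\mathcal X_{\mathcal E}t_1\{v_1/x\}$; (b) $E_0[\mathcal Sk.t_0]\mathcal E E_1[\mathcal Sk.t_1]$ and pure contexts $E_0'\widehat{\mathcal E}E_1'$ imply $\langle t_0\{\lambda x.\langle E_0'[E_0[x]]\rangle/k\}\rangle\mathcal X_{\mathcal E}\langle t_1\{\lambda x.\langle E_1'[E_1[x]]\rangle/k\}\rangle$, $x$ fresh. $\approx$ is the largest environmental bisimulation, $t_0\approx_{\mathcal E}t_1$ meaning $(\mathcal E,t_0,t_1)\in\approx$. Contextual equivalence: $t_0\equiv t_1$ iff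 for all contexts $C$ with $C[t_0],C[t_1]$ closed, $C[t_0]\Downarrow$ a value iff $C[t_1]\Downarrow$ a value, and $C[t_0]\Downarrow$ a stuck term iff $C[t_1]\Downarrow$ a stuck term. *)

(* lambda_S (CBV lambda calculus with shift/reset),
   terms in de Bruijn form (so alpha-equivalent terms are identical). *)
From Stdlib Require Import Arith.

Inductive term : Type :=
| Var   : nat -> term
| Lam   : term -> term
| App   : term -> term -> term
| Shift : term -> term          (* S k.t, binds k = index 0 in the body *)
| Reset : term -> term.

Fixpoint closed_at (n : nat) (t : term) : Prop :=
  match t with
  | Var m => m < n
  | Lam b => closed_at (S n) b
  | App a b => closed_at n a /\ closed_at n b
  | Shift b => closed_at (S n) b
  | Reset a => closed_at n a
  end.
Definition closed (t : term) : Prop := closed_at 0 t.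

Fixpoint lift (c : nat) (t : term) : term :=
  match t with
  | Var n => if n <? c then Var n else Var (S n)
  | Lam b => Lam (lift (S c) b)
  | App a b => App (lift c a) (lift c b)
  | Shift b => Shift (lift (S c) b)
  | Reset a => Reset (lift c a)
  end.

Fixpoint subst (k : nat) (u : term) (t : term) : term :=
  match t with
  | Var n => if n <? k then Var n else if n =? k then u else Var (pred n)
  | Lam b => Lam (subst (S k) (lift 0 u) b)
  | App a b => App (subst k u a) (subst k u b)
  | Shift b => Shift (subst (S k) (lift 0 u) b)
  | Reset a => Reset (subst k u a)
  end.

(* t{v/x} where t is the body of a binder for x *)
Definition inst (t v : term) : term := subst 0 v t.

Definition is_value (t : term) : Prop := exists b, t = Lam b.

(* evaluation contexts F ::= [] | v F | F t | <F>;  the value in  v F  is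
   stored as the body of the lambda, so that it is a value by construction *)
Inductive ectx : Type :=
| EHole  : ectx
| EAppR  : term -> ectx -> ectx
| EAppL  : ectx -> term -> ectx
| EReset : ectx -> ectx.

Fixpoint eplug (F : ectx) (t : term) : term :=
  match F with
  | EHole => t
  | EAppR b F' => App (Lam b) (eplug F' t)
  | EAppL F' u => App (eplug F' t) u
  | EReset F' => Reset (eplug F' t)
  end.

Fixpoint pure (F : ectx) : Prop :=
  match F with
  | EHole => True
  | EAppR _ F' => pure F'
  | EAppL F' _ => pure F'
  | EReset _ => False
  end.

Fixpoint elift (c : nat) (F : ectx) : ectx :=
  match F with
  | EHole => EHole
  | EAppR b F' => EAppR (lift (S c) b) (elift c F')
  | EAppL F' u => EAppL (elift c F') (lift c u)
  | EReset F' => EReset (elift c F')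
  end.

(* \x.<E[x]>  (x fresh) *)
Definition cont (E : ectx) : term := Lam (Reset (eplug (elift 0 E) (Var 0))).

(* \x.<E'[E[x]]>  (x fresh) *)
Definition cont2 (E' E : ectx) : term :=
  Lam (Reset (eplug (elift 0 E') (eplug (elift 0 E) (Var 0)))).

Inductive step : term -> term -> Prop :=
| step_beta : forall F t v, is_value v ->
    step (eplug F (App (Lam t) v)) (eplug F (inst t v))
| step_shift : forall F E t, pure E ->
    step (eplug F (Reset (eplug E (Shift t))))
         (eplug F (Reset (inst t (cont E))))
| step_reset : forall F v, is_value v ->
    step (eplug F (Reset v)) (eplug F v).

Inductive steps : term -> term -> Prop :=
| steps_refl : forall t, steps t t
| steps_step : forall t t' t'', step t t' -> steps t' t'' -> steps t t''.

Definition irreducible (t : term) : Prop := ~ exists t', step t t'.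
Definition stuck (t : term) : Prop := ~ is_value t /\ irreducible t.
Definition normal_form (t : term) : Prop := is_value t \/ stuck t.

Definition evals (t t' : term) : Prop := steps t t' /\ irreducible t'.

Inductive ctx : Type :=
| CHole   : ctx
| CLam    : ctx -> ctx
| CAppR   : term -> ctx -> ctx
| CAppL   : ctx -> term -> ctx
| CShift  : ctx -> ctx
| CReset  : ctx -> ctx.

(* plugging may capture variables (C[t] is syntactic replacement) *)
Fixpoint cplug (C : ctx) (t : term) : term :=
  match C with
  | CHole => t
  | CLam C' => Lam (cplug C' t)
  | CAppR u C' => App u (cplug C' t)
  | CAppL C' u => App (cplug C' t) u
  | CShift C' => Shift (cplug C' t)
  | CReset C' => Reset (cplug C' t)
  end.

Definition ctx_equiv (t0 t1 : term) : Prop :=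
  forall C : ctx, closed (cplug C t0) -> closed (cplug C t1) ->
    ((exists v, evals (cplug C t0) v /\ is_value v) <->
     (exists v, evals (cplug C t1) v /\ is_value v)) /\
    ((exists s, evals (cplug C t0) s /\ stuck s) <->
     (exists s, evals (cplug C t1) s /\ stuck s)).

Definition rel := term -> term -> Prop.

Definition is_env (E : rel) : Prop :=
  forall a b, E a b ->
    closed a /\ closed b /\
    ((is_value a /\ is_value b) \/ (stuck a /\ stuck b)).

Definition empty_rel : rel := fun _ _ => False.

Definition rel_add (E : rel) (a b : term) : rel :=
  fun x y => E x y \/ (x = a /\ y = b).

Inductive tclos (R : rel) : rel :=
| tc_base  : forall a b, R a b -> tclos R a b
| tc_var   : forall n, tclos R (Var n) (Var n)
| tc_lam   : forall a b, tclos R a b -> tclos R (Lam a) (Lam b)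
| tc_app   : forall a a' b b', tclos R a b -> tclos R a' b' ->
               tclos R (App a a') (App b b')
| tc_shift : forall a b, tclos R a b -> tclos R (Shift a) (Shift b)
| tc_reset : forall a b, tclos R a b -> tclos R (Reset a) (Reset b).

Definition tilde (R : rel) : rel :=
  fun a b => tclos R a b /\ closed a /\ closed b.

Inductive hat (R : rel) : ectx -> ectx -> Prop :=
| hat_hole  : hat R EHole EHole
| hat_appR  : forall b0 b1 F0 F1, hat R F0 F1 -> tilde R (Lam b0) (Lam b1) ->
                hat R (EAppR b0 F0) (EAppR b1 F1)
| hat_appL  : forall F0 F1 t0 t1, hat R F0 F1 -> tilde R t0 t1 ->
                hat R (EAppL F0 t0) (EAppL F1 t1)
| hat_reset : forall F0 F1, hat R F0 F1 -> hat R (EReset F0) (EReset F1).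

Record envrel : Type := {
  envs : rel -> Prop;
  trip : rel -> term -> term -> Prop
}.

Definition wf_envrel (X : envrel) : Prop :=
  (forall E, envs X E -> is_env E) /\
  (forall E t0 t1, trip X E t0 t1 -> is_env E /\ closed t0 /\ closed t1).

Definition env_bisim (X : envrel) : Prop :=
  wf_envrel X /\
  (forall E t0 t1, trip X E t0 t1 ->
     (forall t0', step t0 t0' -> exists t1', steps t1 t1' /\ trip X E t0' t1') /\
     (is_value t0 -> exists v1, steps t1 v1 /\ is_value v1 /\
                                 envs X (rel_add E t0 v1)) /\
     (stuck t0 -> exists s1, steps t1 s1 /\ stuck s1 /\
                              envs X (rel_add E t0 s1)) /\
     (forall t1', step t1 t1' -> exists t0', steps t0 t0' /\ trip X E t0' t1') /\
     (is_value t1 -> exists v0, steps t0 v0 /\ is_value v0 /\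
                                 envs X (rel_add E v0 t1)) /\
     (stuck t1 -> exists s0, steps t0 s0 /\ stuck s0 /\
                              envs X (rel_add E s0 t1))) /\
  (forall E, envs X E ->
     (forall b0 b1 v0 v1, E (Lam b0) (Lam b1) -> is_value v0 -> is_value v1 ->
        tilde E v0 v1 -> trip X E (inst b0 v0) (inst b1 v1)) /\
     (forall E0 E1 t0 t1 E0' E1',
        pure E0 -> pure E1 ->
        E (eplug E0 (Shift t0)) (eplug E1 (Shift t1)) ->
        pure E0' -> pure E1' -> hat E E0' E1' ->
        trip X E (Reset (inst t0 (cont2 E0' E0)))
                 (Reset (inst t1 (cont2 E1' E1))))).

(* ≈ : the largest environmental bisimulation (union of all of them) *)
Definition bisimilar (E : rel) (t0 t1 : term) : Prop :=
  exists X : envrel, env_bisim X /\ trip X E t0 t1.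

From Stdlib Require Import Arith Lia.

(* Contextual equivalence, restricted to environments contained in it, is
   itself an environmental bisimulation.  The one substantial fact behind this
   is that reduction is contained in contextual equivalence: when t -> t', every
   step of C[t] either contracts a copy of t, which C[t'] need not match (and
   the number of remaining copies drops), or is matched by exactly one step of
   C[t'].  Clauses (2) then hold because contextual equivalence is a
   congruence: the two terms to be related are one-step reducts of redexes
   built from related terms. *)

Fixpoint ecomp (F G : ectx) : ectx :=
  match F with
  | EHole => G
  | EAppR b F' => EAppR b (ecomp F' G)
  | EAppL F' u => EAppL (ecomp F' G) u
  | EReset F' => EReset (ecomp F' G)
  end.

Lemma eplug_ecomp F G x : eplug (ecomp F G) x = eplug F (eplug G x).
Proof. induction F; simpl; congruence. Qed.

Lemma pure_ecomp F G : pure F -> pure G -> pure (ecomp F G).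
Proof. induction F; simpl; tauto. Qed.

Lemma elift_ecomp c F G : elift c (ecomp F G) = ecomp (elift c F) (elift c G).
Proof. induction F; simpl; congruence. Qed.

Lemma cont_ecomp E' E : cont (ecomp E' E) = cont2 E' E.
Proof. unfold cont, cont2. rewrite elift_ecomp, eplug_ecomp. reflexivity. Qed.

Lemma step_eplug G x y : step x y -> step (eplug G x) (eplug G y).
Proof.
  intros H; destruct H; rewrite <- !eplug_ecomp; constructor; assumption.
Qed.

(** * Inversion of reduction, determinism and progress *)

Lemma eplug_eq_Lam F x b : eplug F x = Lam b -> F = EHole /\ x = Lam b.
Proof. destruct F; simpl; intros H; try discriminate; auto. Qed.

Lemma Lam_no_step b y : ~ step (Lam b) y.
Proof.
  intros H. remember (Lam b) as w eqn:Hw.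
  destruct H; apply eplug_eq_Lam in Hw; destruct Hw; discriminate.
Qed.

Lemma Var_no_step k y : ~ step (Var k) y.
Proof. intros H. remember (Var k) as w eqn:Hw. destruct H; destruct F; discriminate. Qed.

Lemma Shift_no_step s y : ~ step (Shift s) y.
Proof. intros H. remember (Shift s) as w eqn:Hw. destruct H; destruct F; discriminate. Qed.

Lemma value_no_step v y : is_value v -> ~ step v y.
Proof. intros [b ->]. apply Lam_no_step. Qed.

Lemma is_value_dec t : is_value t \/ ~ is_value t.
Proof.
  destruct t; try (left; eexists; reflexivity); right; intros [b H]; discriminate.
Qed.

Lemma step_App_inv a a' z : step (App a a') z ->
  (exists a1, step a a1 /\ z = App a1 a') \/
  (exists b a1, a = Lam b /\ step a' a1 /\ z = App (Lam b) a1) \/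
  (exists b, a = Lam b /\ is_value a' /\ z = inst b a').
Proof.
  intros H. remember (App a a') as w eqn:Hw.
  destruct H as [F t v Hv | F E t HE | F v Hv];
    destruct F; simpl in Hw; try discriminate; injection Hw; intros; subst.
  - right; right; eauto.
  - right; left. do 2 eexists; split; [reflexivity | split; [apply step_beta; auto | reflexivity]].
  - left. eexists; split; [apply step_beta; auto | reflexivity].
  - right; left. do 2 eexists; split; [reflexivity | split; [apply step_shift; auto | reflexivity]].
  - left. eexists; split; [apply step_shift; auto | reflexivity].
  - right; left. do 2 eexists; split; [reflexivity | split; [apply step_reset; auto | reflexivity]].
  - left. eexists; split; [apply step_reset; auto | reflexivity].
Qed.

Lemma step_Reset_inv a z : step (Reset a) z ->
  (exists a1, step a a1 /\ z = Reset a1) \/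
  (exists E s, pure E /\ a = eplug E (Shift s) /\ z = Reset (inst s (cont E))) \/
  (is_value a /\ z = a).
Proof.
  intros H. remember (Reset a) as w eqn:Hw.
  destruct H as [F t v Hv | F E t HE | F v Hv];
    destruct F; simpl in Hw; try discriminate; injection Hw; intros; subst.
  - left. eexists; split; [apply step_beta; auto | reflexivity].
  - right; left. eauto.
  - left. eexists; split; [apply step_shift; auto | reflexivity].
  - right; right; auto.
  - left. eexists; split; [apply step_reset; auto | reflexivity].
Qed.

Lemma pure_shift_not_value E s : pure E -> ~ is_value (eplug E (Shift s)).
Proof. intros HE [b H]. apply eplug_eq_Lam in H. destruct H; discriminate. Qed.

Lemma pure_shift_no_step E s y : pure E -> ~ step (eplug E (Shift s)) y.
Proof.
  revert y; induction E; simpl; intros y HE H.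
  - eapply Shift_no_step; eauto.
  - destruct (step_App_inv _ _ _ H)
      as [[a1 [Ha _]] | [[b [a1 [Hb [Ha _]]]] | [b [Hb [Hv _]]]]].
    + eapply Lam_no_step; eauto.
    + eapply IHE; eauto.
    + eapply pure_shift_not_value; eauto.
  - destruct (step_App_inv _ _ _ H)
      as [[a1 [Ha _]] | [[b [a1 [Hb [Ha _]]]] | [b [Hb [Hv _]]]]].
    + eapply IHE; eauto.
    + eapply pure_shift_not_value; [exact HE | exists b; exact Hb].
    + eapply pure_shift_not_value; [exact HE | exists b; exact Hb].
  - destruct HE.
Qed.

Lemma pure_shift_inj E E' s s' : pure E -> pure E' ->
  eplug E (Shift s) = eplug E' (Shift s') -> E = E' /\ s = s'.
Proof.
  revert E' s s'; induction E; destruct E'; simpl; intros s s' HE HE' H;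
    try discriminate; try tauto; injection H; intros; subst.
  all: try (exfalso; eapply pure_shift_not_value; [| eexists; eauto]; eauto; fail).
  all: try (exfalso; eapply pure_shift_not_value; [| eexists; symmetry; eauto]; eauto; fail).
  all: try (edestruct IHE as [? ?]; [| | eassumption |]; eauto; subst; auto; fail).
  all: auto.
Qed.

Lemma step_det x y1 y2 : step x y1 -> step x y2 -> y1 = y2.
Proof.
  revert y1 y2; induction x; intros y1 y2 H1 H2.
  - exfalso; eapply Var_no_step; eauto.
  - exfalso; eapply Lam_no_step; eauto.
  - destruct (step_App_inv _ _ _ H1)
      as [[a1 [Ha ->]] | [[b [a1 [-> [Ha ->]]]] | [b [-> [Hv ->]]]]];
    destruct (step_App_inv _ _ _ H2)
      as [[c1 [Hc ->]] | [[d [c1 [Hd [Hc ->]]]] | [d [Hd [Hw ->]]]]];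
    try (exfalso; eapply Lam_no_step; eauto; fail);
    try (subst; exfalso; eapply Lam_no_step; eauto; fail);
    try (exfalso; eapply value_no_step; eauto; fail).
    + rewrite (IHx1 _ _ Ha Hc); auto.
    + injection Hd; intros; subst. rewrite (IHx2 _ _ Ha Hc); auto.
    + injection Hd; intros; subst; auto.
  - exfalso; eapply Shift_no_step; eauto.
  - destruct (step_Reset_inv _ _ H1) as [[a1 [Ha ->]] | [[E [s [HE [-> ->]]]] | [Hv ->]]];
    destruct (step_Reset_inv _ _ H2)
      as [[c1 [Hc ->]] | [[E' [s' [HE' [Heq ->]]]] | [Hw ->]]];
    try (subst; exfalso; eapply pure_shift_no_step; eauto; fail);
    try (exfalso; eapply value_no_step; eauto; fail);
    try (exfalso; eapply pure_shift_not_value; eauto; fail); auto.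
    + rewrite (IHx _ _ Ha Hc); auto.
    + destruct (pure_shift_inj _ _ _ _ HE HE' Heq); subst; auto.
    + exfalso; eapply pure_shift_not_value; [exact HE' |]. rewrite <- Heq; auto.
Qed.

Lemma progress x : closed x ->
  is_value x \/ (exists E s, pure E /\ x = eplug E (Shift s)) \/ (exists y, step x y).
Proof.
  unfold closed; induction x; simpl; intros H.
  - lia.
  - left; eexists; eauto.
  - destruct H as [H1 H2].
    destruct (IHx1 H1) as [[b ->] | [[E [s [HE ->]]] | [y Hy]]].
    + destruct (IHx2 H2) as [Hv | [[E [s [HE ->]]] | [y Hy]]].
      * right; right. eexists. exact (step_beta EHole b x2 Hv).
      * right; left. exists (EAppR b E), s; simpl; auto.
      * right; right. eexists. exact (step_eplug (EAppR b EHole) _ _ Hy).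
    + right; left. exists (EAppL E x2), s; simpl; auto.
    + right; right. eexists. exact (step_eplug (EAppL EHole x2) _ _ Hy).
  - right; left. exists EHole, x; simpl; auto.
  - destruct (IHx H) as [Hv | [[E [s [HE ->]]] | [y Hy]]].
    + right; right. eexists. exact (step_reset EHole x Hv).
    + right; right. eexists. exact (step_shift EHole E s HE).
    + right; right. eexists. exact (step_eplug (EReset EHole) _ _ Hy).
Qed.

Lemma irreducible_or_step x : closed x -> irreducible x \/ exists y, step x y.
Proof.
  intros Hx. destruct (progress x Hx) as [Hv | [[E [s [HE ->]]] | Hs]]; auto.
  - left; intros [y Hy]; exact (value_no_step _ _ Hv Hy).
  - left; intros [y Hy]; exact (pure_shift_no_step _ _ _ HE Hy).
Qed.

Lemma evals_det x a b : evals x a -> evals x b -> a = b.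
Proof.
  intros [Ha Hia]; revert b; induction Ha as [x | x x1 a Hx1 _ IH]; intros b [Hb Hib].
  - destruct Hb as [x | x x2 b Hx2 _]; auto. exfalso; apply Hia; eauto.
  - destruct Hb as [x | x x2 b Hx2 Hb].
    + exfalso; apply Hib; eauto.
    + rewrite (step_det _ _ _ Hx1 Hx2) in IH. exact (IH Hia b (conj Hb Hib)).
Qed.

Lemma evals_step x x1 u : step x x1 -> evals x1 u -> evals x u.
Proof. intros Hx1 [Hu Hiu]. split; [exact (steps_step _ _ _ Hx1 Hu) | exact Hiu]. Qed.

Lemma closed_at_mono a n m : closed_at n a -> n <= m -> closed_at m a.
Proof.
  revert n m; induction a; simpl; intros n0 m H Hle; try lia;
    try (destruct H; split); eauto with arith.
Qed.

Lemma lift_closed_at a m c : closed_at m a -> m <= c -> lift c a = a.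
Proof.
  revert m c; induction a; simpl; intros m c H Hle.
  - destruct (Nat.ltb_spec n c); [reflexivity | lia].
  - rewrite (IHa (S m)); auto; lia.
  - destruct H; rewrite (IHa1 m), (IHa2 m); auto.
  - rewrite (IHa (S m)); auto; lia.
  - rewrite (IHa m); auto.
Qed.

Lemma subst_closed_at a m k u : closed_at m a -> m <= k -> subst k u a = a.
Proof.
  revert m k u; induction a; simpl; intros m k u H Hle.
  - destruct (Nat.ltb_spec n k); [reflexivity | lia].
  - rewrite (IHa (S m)); auto; lia.
  - destruct H; rewrite (IHa1 m), (IHa2 m); auto.
  - rewrite (IHa (S m)); auto; lia.
  - rewrite (IHa m); auto.
Qed.

Lemma closed_at_lift a n c : closed_at n a -> closed_at (S n) (lift c a).
Proof.
  revert n c; induction a; simpl; intros n0 c H; try (destruct H; split); auto.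
  destruct (Nat.ltb_spec n c); simpl; lia.
Qed.

Lemma closed_at_subst a n u k : closed_at (S n) a -> closed_at n u -> k <= n ->
  closed_at n (subst k u a).
Proof.
  revert n u k; induction a; simpl; intros n0 u k H Hu Hk.
  - destruct (Nat.ltb_spec n k); simpl; [lia |].
    destruct (Nat.eqb_spec n k); simpl; [auto | lia].
  - apply IHa; auto using closed_at_lift with arith.
  - destruct H; split; auto.
  - apply IHa; auto using closed_at_lift with arith.
  - auto.
Qed.

Fixpoint closedF (n : nat) (F : ectx) : Prop :=
  match F with
  | EHole => True
  | EAppR b F' => closed_at (S n) b /\ closedF n F'
  | EAppL F' u => closedF n F' /\ closed_at n u
  | EReset F' => closedF n F'
  end.

Lemma closed_at_eplug F n x : closed_at n (eplug F x) <-> closedF n F /\ closed_at n x.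
Proof. induction F; simpl; try rewrite IHF; tauto. Qed.

Lemma closedF_elift F n c : closedF n F -> closedF (S n) (elift c F).
Proof. induction F; simpl; intros H; try (destruct H; split); auto using closed_at_lift. Qed.

Lemma closed_cont E : closedF 0 E -> closed (cont E).
Proof.
  intros H. unfold closed, cont; simpl. apply closed_at_eplug.
  split; [apply closedF_elift; auto | simpl; lia].
Qed.

Lemma step_closed x y : step x y -> closed x -> closed y.
Proof.
  unfold closed; intros H; destruct H; rewrite !closed_at_eplug; intros [HF Hr];
    split; auto; simpl in *.
  - destruct Hr. apply closed_at_subst; auto.
  - rewrite closed_at_eplug in Hr. destruct Hr as [HE Ht].
    apply closed_at_subst; auto. exact (closed_cont E HE).
Qed.

Lemma steps_closed x y : steps x y -> closed x -> closed y.
Proof. induction 1; eauto using step_closed. Qed.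

(** * Reduction is contained in contextual equivalence *)

Definition obs_equiv (x y : term) : Prop :=
  ((exists v, evals x v /\ is_value v) <-> (exists v, evals y v /\ is_value v)) /\
  ((exists s, evals x s /\ stuck s) <-> (exists s, evals y s /\ stuck s)).

Lemma obs_equiv_sym x y : obs_equiv x y -> obs_equiv y x.
Proof. unfold obs_equiv; tauto. Qed.

Lemma obs_equiv_trans x y z : obs_equiv x y -> obs_equiv y z -> obs_equiv x z.
Proof. unfold obs_equiv; tauto. Qed.

Lemma obs_equiv_evals x y u : obs_equiv x y -> evals x u ->
  exists w, evals y w /\ (is_value u <-> is_value w).
Proof.
  intros [Hval Hstuck] Hu. destruct (is_value_dec u) as [Hv | Hnv].
  - destruct (proj1 Hval (ex_intro _ u (conj Hu Hv))) as [w [Hw Hwv]].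
    exists w; tauto.
  - assert (Hs : stuck u) by (split; [exact Hnv | exact (proj2 Hu)]).
    destruct (proj1 Hstuck (ex_intro _ u (conj Hu Hs))) as [w [Hw [Hwnv _]]].
    exists w; tauto.
Qed.

Lemma obs_equiv_of_evals x y :
  (forall u, evals x u -> exists w, evals y w /\ (is_value u <-> is_value w)) ->
  (forall w, evals y w -> exists u, evals x u /\ (is_value u <-> is_value w)) ->
  obs_equiv x y.
Proof.
  intros Hxy Hyx; split; split.
  - intros [u [Hu Hv]]. destruct (Hxy u Hu) as [w [Hw Hiff]]. exists w; tauto.
  - intros [w [Hw Hv]]. destruct (Hyx w Hw) as [u [Hu Hiff]]. exists u; tauto.
  - intros [u [Hu [Hnv Hi]]]. destruct (Hxy u Hu) as [w [Hw Hiff]].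
    exists w; unfold stuck; split; [exact Hw |]. split; [tauto | exact (proj2 Hw)].
  - intros [w [Hw [Hnv Hi]]]. destruct (Hyx w Hw) as [u [Hu Hiff]].
    exists u; unfold stuck; split; [exact Hu |]. split; [tauto | exact (proj2 Hu)].
Qed.

Section Replacement.

Variables t t' : term.
Hypothesis t_closed : closed t.
Hypothesis t_step : step t t'.

Let t'_closed : closed t' := step_closed t t' t_step t_closed.

(* [repl n a b]: [b] is [a] with [n] occurrences of [t] replaced by [t']. *)
Inductive repl : nat -> term -> term -> Prop :=
| repl_redex : repl 1 t t'
| repl_var k : repl 0 (Var k) (Var k)
| repl_lam n a b : repl n a b -> repl n (Lam a) (Lam b)
| repl_app n m a b a' b' : repl n a b -> repl m a' b' -> repl (n + m) (App a a') (App b b')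
| repl_shift n a b : repl n a b -> repl n (Shift a) (Shift b)
| repl_reset n a b : repl n a b -> repl n (Reset a) (Reset b).

Inductive replF : ectx -> ectx -> Prop :=
| replF_hole : replF EHole EHole
| replF_appR n b b' F F' : repl n b b' -> replF F F' -> replF (EAppR b F) (EAppR b' F')
| replF_appL n F F' u u' : replF F F' -> repl n u u' -> replF (EAppL F u) (EAppL F' u')
| replF_reset F F' : replF F F' -> replF (EReset F) (EReset F').

Lemma repl_refl a : repl 0 a a.
Proof. induction a; try constructor; auto. exact (repl_app 0 0 _ _ _ _ IHa1 IHa2). Qed.

Lemma repl_cplug C : exists n, repl n (cplug C t) (cplug C t').
Proof.
  induction C as [| C [n H] | u C [n H] | C [n H] u | C [n H] | C [n H]]; simpl.
  - exists 1; constructor.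
  - exists n; constructor; auto.
  - exists (0 + n); constructor; auto using repl_refl.
  - exists (n + 0); constructor; auto using repl_refl.
  - exists n; constructor; auto.
  - exists n; constructor; auto.
Qed.

Lemma repl_lift n a b : repl n a b -> forall c, repl n (lift c a) (lift c b).
Proof.
  induction 1; intros c; simpl; try (constructor; auto; fail).
  - rewrite (lift_closed_at t 0), (lift_closed_at t' 0); auto with arith. constructor.
  - destruct (k <? c); constructor.
Qed.

Lemma repl_subst n a b : repl n a b -> forall k m u u', repl m u u' ->
  exists j, repl j (subst k u a) (subst k u' b).
Proof.
  induction 1 as [| x | n a b _ IH | n m a b a' b' _ IH1 _ IH2 | n a b _ IH | n a b _ IH];
    intros kk m0 u u' Hu; simpl.
  - rewrite (subst_closed_at t 0), (subst_closed_at t' 0); auto with arith.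
    exists 1; constructor.
  - destruct (x <? kk); [exists 0; constructor |].
    destruct (x =? kk); [eauto | exists 0; constructor].
  - destruct (IH (S kk) m0 (lift 0 u) (lift 0 u')) as [j Hj]; auto using repl_lift.
    exists j; constructor; auto.
  - destruct (IH1 kk m0 u u' Hu) as [j1 H1], (IH2 kk m0 u u' Hu) as [j2 H2].
    exists (j1 + j2); constructor; auto.
  - destruct (IH (S kk) m0 (lift 0 u) (lift 0 u')) as [j Hj]; auto using repl_lift.
    exists j; constructor; auto.
  - destruct (IH kk m0 u u' Hu) as [j Hj]. exists j; constructor; auto.
Qed.

Lemma replF_eplug F F' : replF F F' ->
  forall n a b, repl n a b -> exists j, repl j (eplug F a) (eplug F' b).
Proof.
  induction 1 as [| n c c' F F' Hc _ IH | n F F' u u' _ IH Hu | F F' _ IH];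
    intros k a b Hab; simpl; try destruct (IH k a b Hab) as [j Hj]; eauto.
  - exists (n + j). constructor; auto. constructor; auto.
  - exists (j + n). constructor; auto.
  - exists j. constructor; auto.
Qed.

Lemma replF_elift F F' : replF F F' -> forall c, replF (elift c F) (elift c F').
Proof. induction 1; intros c; simpl; econstructor; eauto using repl_lift. Qed.

Lemma repl_cont E E' : replF E E' -> exists j, repl j (cont E) (cont E').
Proof.
  intros H. unfold cont.
  destruct (replF_eplug _ _ (replF_elift E E' H 0) 0 (Var 0) (Var 0) (repl_var 0))
    as [j Hj].
  exists j. do 2 constructor. exact Hj.
Qed.

Lemma redex_not_value : ~ is_value t.
Proof. intros Hv. exact (value_no_step t t' Hv t_step). Qed.

Lemma redex_not_pure_shift E s : pure E -> t <> eplug E (Shift s).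
Proof. intros HE Ht. apply (pure_shift_no_step E s t' HE). rewrite <- Ht. exact t_step. Qed.

Lemma repl_Lam_inv n a y : repl n (Lam a) y -> exists b, y = Lam b /\ repl n a b.
Proof.
  intros H; inversion H; subst.
  - exfalso; apply redex_not_value; eexists; eauto.
  - eauto.
Qed.

Lemma repl_value n x y : repl n x y -> is_value x -> is_value y.
Proof. intros H [a ->]. destruct (repl_Lam_inv n a y H) as [b [-> _]]. eexists; eauto. Qed.

Lemma repl_pure_shift E s n y : pure E -> repl n (eplug E (Shift s)) y ->
  exists E' s' k, pure E' /\ y = eplug E' (Shift s') /\ replF E E' /\ repl k s s'.
Proof.
  revert s n y; induction E as [| c E IHE | E IHE u | E IHE]; intros s n y HE Hs;
    [| | | destruct HE]; inversion Hs as [| | | n1 n2 a1 b1 a2 b2 H1 H2 | n1 a1 b1 H1 |]; subst;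
    try match goal with Ht : t = _ |- _ => exfalso; exact (redex_not_pure_shift _ s HE Ht) end.
  - exists EHole, b1, n; simpl; repeat split; auto. constructor.
  - destruct (repl_Lam_inv _ _ _ H1) as [c' [-> Hc]].
    destruct (IHE s n2 b2 HE H2) as [E' [s' [k [HE' [-> [HF Hss]]]]]].
    exists (EAppR c' E'), s', k; simpl; repeat split; auto. econstructor; eauto.
  - destruct (IHE s n1 b1 HE H1) as [E' [s' [k [HE' [-> [HF Hss]]]]]].
    exists (EAppL E' b2), s', k; simpl; repeat split; auto. econstructor; eauto.
Qed.

Lemma repl_step n x y : repl n x y -> forall x', step x x' ->
  (exists m, m < n /\ repl m x' y) \/ (exists y' m, step y y' /\ repl m x' y').
Proof.
  induction 1 as [| k | n a b _ _ | n m a b a' b' Hab IH1 Ha'b' IH2 | n a b _ _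
                  | n a b Hab IH]; intros x' Hx'.
  - left. exists 0; split; [lia |]. rewrite <- (step_det _ _ _ t_step Hx'). apply repl_refl.
  - exfalso; eapply Var_no_step; eauto.
  - exfalso; eapply Lam_no_step; eauto.
  - destruct (step_App_inv _ _ _ Hx')
      as [[a1 [Ha ->]] | [[ba [a1 [-> [Ha ->]]]] | [ba [-> [Hv ->]]]]].
    + destruct (IH1 _ Ha) as [[k [Hk Hs]] | [b1 [k [Hb Hs]]]].
      * left; exists (k + m); split; [lia | constructor; auto].
      * right; exists (App b1 b'), (k + m); split.
        -- exact (step_eplug (EAppL EHole b') _ _ Hb).
        -- constructor; auto.
    + destruct (IH2 _ Ha) as [[k [Hk Hs]] | [b1 [k [Hb Hs]]]].
      * left; exists (n + k); split; [lia | constructor; auto].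
      * right; exists (App b b1), (n + k); split.
        -- destruct (repl_Lam_inv _ _ _ Hab) as [c [-> _]].
           exact (step_eplug (EAppR c EHole) _ _ Hb).
        -- constructor; auto.
    + destruct (repl_Lam_inv _ _ _ Hab) as [c [-> Hc]].
      destruct (repl_subst _ _ _ Hc 0 m a' b' Ha'b') as [j Hj].
      right; exists (inst c b'), j; split; auto.
      exact (step_beta EHole c b' (repl_value _ _ _ Ha'b' Hv)).
  - exfalso; eapply Shift_no_step; eauto.
  - destruct (step_Reset_inv _ _ Hx') as [[a1 [Ha ->]] | [[E [s [HE [-> ->]]]] | [Hv ->]]].
    + destruct (IH _ Ha) as [[k [Hk Hs]] | [b1 [k [Hb Hs]]]].
      * left; exists k; split; [lia | constructor; auto].
      * right; exists (Reset b1), k; split.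
        -- exact (step_eplug (EReset EHole) _ _ Hb).
        -- constructor; auto.
    + destruct (repl_pure_shift E s n b HE Hab) as [E' [s' [k [HE' [-> [Hc Hss]]]]]].
      destruct (repl_cont _ _ Hc) as [j Hj].
      destruct (repl_subst _ _ _ Hss 0 _ _ _ Hj) as [i Hi].
      right; exists (Reset (inst s' (cont E'))), i; split.
      * exact (step_shift EHole E' s' HE').
      * constructor; auto.
    + right; exists b, n; split; auto.
      exact (step_reset EHole b (repl_value _ _ _ Hab Hv)).
Qed.

Lemma repl_evals_forward x u : steps x u -> irreducible u -> closed x ->
  forall n y, repl n x y -> exists w, evals y w /\ (is_value u <-> is_value w).
Proof.
  induction 1 as [x | x x1 u Hx1 _ IH]; intros Hu Hx n y Hxy.
  - destruct (progress x Hx) as [Hv | [[E [s [HE ->]]] | [z Hz]]].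
    + assert (Hvy : is_value y) by exact (repl_value _ _ _ Hxy Hv).
      exists y; split; [split; [constructor | intros [z Hz]; exact (value_no_step _ _ Hvy Hz)] | tauto].
    + destruct (repl_pure_shift E s n y HE Hxy) as [E' [s' [k [HE' [-> _]]]]].
      exists (eplug E' (Shift s')); split.
      * split; [constructor | intros [z Hz]; exact (pure_shift_no_step _ _ _ HE' Hz)].
      * split; intros Hv; exfalso;
          [exact (pure_shift_not_value E s HE Hv) | exact (pure_shift_not_value E' s' HE' Hv)].
    + exfalso; apply Hu; eauto.
  - assert (Hx1c : closed x1) by exact (step_closed _ _ Hx1 Hx).
    destruct (repl_step n x y Hxy x1 Hx1) as [[m [_ Hs']] | [y' [m [Hy Hs']]]].
    + exact (IH Hu Hx1c m y Hs').
    + destruct (IH Hu Hx1c m y' Hs') as [w [Hw Hiff]].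
      exists w; split; [exact (evals_step _ _ _ Hy Hw) | exact Hiff].
Qed.

Lemma repl_evals_backward y w : steps y w -> irreducible w ->
  forall n x, closed x -> repl n x y -> exists u, evals x u.
Proof.
  (* induction on the evaluation of [y] and, inside it, on the count [n] *)
  induction 1 as [y | y y1 w Hy1 _ IH]; intros Hw n;
    induction n as [n IHn] using (well_founded_induction lt_wf); intros x Hx Hxy;
    destruct (irreducible_or_step x Hx) as [Hxi | [x1 Hx1]];
    try (exists x; split; [constructor | exact Hxi]; fail);
    assert (Hx1c : closed x1) by exact (step_closed _ _ Hx1 Hx);
    destruct (repl_step n x _ Hxy x1 Hx1) as [[m [Hm Hs1]] | [y' [m [Hy Hs1]]]].
  - destruct (IHn m Hm x1 Hx1c Hs1) as [u Hu]. exists u; exact (evals_step _ _ _ Hx1 Hu).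
  - exfalso; apply Hw; eauto.
  - destruct (IHn m Hm x1 Hx1c Hs1) as [u Hu]. exists u; exact (evals_step _ _ _ Hx1 Hu).
  - rewrite <- (step_det _ _ _ Hy1 Hy) in Hs1.
    destruct (IH Hw m x1 Hx1c Hs1) as [u Hu]. exists u; exact (evals_step _ _ _ Hx1 Hu).
Qed.

Lemma repl_obs_equiv n x y : repl n x y -> closed x -> obs_equiv x y.
Proof.
  intros Hxy Hx. apply obs_equiv_of_evals.
  - intros u [Hu Hiu]. exact (repl_evals_forward x u Hu Hiu Hx n y Hxy).
  - intros w [Hw Hiw].
    destruct (repl_evals_backward y w Hw Hiw n x Hx Hxy) as [u Hu].
    destruct (repl_evals_forward x u (proj1 Hu) (proj2 Hu) Hx n y Hxy) as [w' [Hw' Hiff]].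
    rewrite (evals_det _ _ _ Hw' (conj Hw Hiw)) in Hiff.
    eauto.
Qed.

End Replacement.

Fixpoint cdepth (n : nat) (C : ctx) : nat :=
  match C with
  | CHole => n
  | CLam C' | CShift C' => cdepth (S n) C'
  | CAppR _ C' | CAppL C' _ | CReset C' => cdepth n C'
  end.

Fixpoint cclosed (n : nat) (C : ctx) : Prop :=
  match C with
  | CHole => True
  | CLam C' | CShift C' => cclosed (S n) C'
  | CAppR u C' => closed_at n u /\ cclosed n C'
  | CAppL C' u => cclosed n C' /\ closed_at n u
  | CReset C' => cclosed n C'
  end.

Lemma closed_at_cplug C n x :
  closed_at n (cplug C x) <-> cclosed n C /\ closed_at (cdepth n C) x.
Proof. revert n; induction C; simpl; intros; try rewrite IHC; tauto. Qed.

Fixpoint ccomp (C D : ctx) : ctx :=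
  match C with
  | CHole => D
  | CLam C' => CLam (ccomp C' D)
  | CAppR u C' => CAppR u (ccomp C' D)
  | CAppL C' u => CAppL (ccomp C' D) u
  | CShift C' => CShift (ccomp C' D)
  | CReset C' => CReset (ccomp C' D)
  end.

Lemma cplug_ccomp C D x : cplug (ccomp C D) x = cplug C (cplug D x).
Proof. induction C; simpl; congruence. Qed.

Lemma closed_cplug_closed C a b : closed b -> closed (cplug C a) -> closed (cplug C b).
Proof.
  unfold closed; intros Hb H. apply closed_at_cplug in H. apply closed_at_cplug.
  destruct H; split; eauto using closed_at_mono with arith.
Qed.

Lemma ctx_equiv_refl a : ctx_equiv a a.
Proof. intros C _ _. unfold obs_equiv; tauto. Qed.

Lemma ctx_equiv_sym a b : ctx_equiv a b -> ctx_equiv b a.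
Proof. intros H C H1 H2. exact (obs_equiv_sym _ _ (H C H2 H1)). Qed.

Lemma ctx_equiv_trans a b c : closed b -> ctx_equiv a b -> ctx_equiv b c -> ctx_equiv a c.
Proof.
  intros Hb H1 H2 C Ca Cc.
  assert (Cb : closed (cplug C b)) by exact (closed_cplug_closed C a b Hb Ca).
  exact (obs_equiv_trans _ _ _ (H1 C Ca Cb) (H2 C Cb Cc)).
Qed.

Lemma ctx_equiv_cplug D a b : ctx_equiv a b -> ctx_equiv (cplug D a) (cplug D b).
Proof. intros H C. rewrite <- !cplug_ccomp. apply H. Qed.

Lemma ctx_equiv_App a a' b b' : ctx_equiv a b -> ctx_equiv a' b' ->
  ctx_equiv (App a a') (App b b').
Proof.
  intros H H' C H1 H2.
  (* [ctx_equiv] only tests closing contexts, so C[b a'] must be shown closed *)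
  assert (Hm : closed (cplug C (App b a'))).
  { unfold closed in *. rewrite closed_at_cplug in *. simpl in *. tauto. }
  apply obs_equiv_trans with (cplug C (App b a')).
  - pose proof (H (ccomp C (CAppL CHole a'))) as HC.
    rewrite !cplug_ccomp in HC. exact (HC H1 Hm).
  - pose proof (H' (ccomp C (CAppR b CHole))) as HC.
    rewrite !cplug_ccomp in HC. exact (HC Hm H2).
Qed.

Lemma step_ctx_equiv t t' : closed t -> step t t' -> ctx_equiv t t'.
Proof.
  intros Ht Hst C H1 _. destruct (repl_cplug t t' C) as [n Hs].
  exact (repl_obs_equiv t t' Ht Hst n _ _ Hs H1).
Qed.

Lemma steps_ctx_equiv x y : steps x y -> closed x -> ctx_equiv x y.
Proof.
  induction 1 as [x | x x1 y Hx1 _ IH]; intros Hx.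
  - apply ctx_equiv_refl.
  - assert (Hx1c : closed x1) by exact (step_closed _ _ Hx1 Hx).
    apply ctx_equiv_trans with x1; auto using step_ctx_equiv.
Qed.

Lemma tclos_ctx_equiv R : (forall a b, R a b -> ctx_equiv a b) ->
  forall a b, tclos R a b -> ctx_equiv a b.
Proof.
  intros HR; induction 1.
  - auto.
  - apply ctx_equiv_refl.
  - exact (ctx_equiv_cplug (CLam CHole) _ _ IHtclos).
  - apply ctx_equiv_App; auto.
  - exact (ctx_equiv_cplug (CShift CHole) _ _ IHtclos).
  - exact (ctx_equiv_cplug (CReset CHole) _ _ IHtclos).
Qed.

Lemma hat_tclos R F0 F1 : hat R F0 F1 -> forall a b, tclos R a b ->
  tclos R (eplug F0 a) (eplug F1 b).
Proof.
  induction 1 as [| b0 b1 F0 F1 _ IH [Hb _] | F0 F1 t0 t1 _ IH [Ht _] | F0 F1 _ IH];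
    intros a b Hab; simpl; auto using tc_app, tc_reset.
Qed.

Lemma hat_closedF R F0 F1 : hat R F0 F1 -> closedF 0 F0 /\ closedF 0 F1.
Proof.
  induction 1 as [| b0 b1 F0 F1 _ IH [_ [H0 H1]] | F0 F1 t0 t1 _ IH [_ [H0 H1]] | F0 F1 _ IH];
    unfold closed in *; simpl in *; tauto.
Qed.

Lemma ctx_equiv_normal_match t0 t1 : closed t0 -> closed t1 -> ctx_equiv t0 t1 ->
  irreducible t0 ->
  exists u1, evals t1 u1 /\ (is_value t0 <-> is_value u1) /\ closed u1 /\ ctx_equiv t0 u1.
Proof.
  intros H0 H1 Heq Hi.
  destruct (obs_equiv_evals t0 t1 t0 (Heq CHole H0 H1) (conj (steps_refl t0) Hi))
    as [u1 [[Hs Hui] Hiff]].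
  assert (Hu1 : closed u1) by exact (steps_closed _ _ Hs H1).
  exists u1; split; [split; assumption |]. split; [exact Hiff |]. split; [exact Hu1 |].
  apply ctx_equiv_trans with t1; auto using steps_ctx_equiv.
Qed.

Lemma ctx_equiv_reducts r0 r1 s0 s1 : closed r0 -> closed r1 -> ctx_equiv r0 r1 ->
  step r0 s0 -> step r1 s1 -> closed s0 /\ closed s1 /\ ctx_equiv s0 s1.
Proof.
  intros H0 H1 Heq S0 S1.
  split; [exact (step_closed _ _ S0 H0) |]. split; [exact (step_closed _ _ S1 H1) |].
  apply ctx_equiv_trans with r0; auto using ctx_equiv_sym, step_ctx_equiv.
  apply ctx_equiv_trans with r1; auto using step_ctx_equiv.
Qed.

(** * The bisimulation *)

Definition equiv_env (E : rel) : Prop := is_env E /\ forall a b, E a b -> ctx_equiv a b.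

Definition ctx_equiv_envrel : envrel :=
  {| envs := equiv_env;
     trip := fun E t0 t1 => equiv_env E /\ closed t0 /\ closed t1 /\ ctx_equiv t0 t1 |}.

Lemma equiv_env_add E a b : equiv_env E -> closed a -> closed b ->
  (is_value a /\ is_value b) \/ (stuck a /\ stuck b) -> ctx_equiv a b ->
  equiv_env (rel_add E a b).
Proof. intros [HE1 HE2] Ha Hb Hk Hab; split; intros x y [H | [-> ->]]; auto. Qed.

Lemma ctx_equiv_step_l t0 t1 t0' : closed t0 -> ctx_equiv t0 t1 -> step t0 t0' ->
  closed t0' /\ ctx_equiv t0' t1.
Proof.
  intros H0 Heq Hs. split; [exact (step_closed _ _ Hs H0) |].
  apply ctx_equiv_trans with t0; auto using ctx_equiv_sym, step_ctx_equiv.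
Qed.

Lemma ctx_equiv_value_match t0 t1 : closed t0 -> closed t1 -> ctx_equiv t0 t1 ->
  is_value t0 -> exists v1, steps t1 v1 /\ is_value v1 /\ closed v1 /\ ctx_equiv t0 v1.
Proof.
  intros H0 H1 Heq Hv.
  assert (Hi : irreducible t0) by (intros [y Hy]; exact (value_no_step _ _ Hv Hy)).
  destruct (ctx_equiv_normal_match t0 t1 H0 H1 Heq Hi) as [v1 [[Hs _] [Hiff Hv1]]].
  exists v1; tauto.
Qed.

Lemma ctx_equiv_stuck_match t0 t1 : closed t0 -> closed t1 -> ctx_equiv t0 t1 ->
  stuck t0 -> exists s1, steps t1 s1 /\ stuck s1 /\ closed s1 /\ ctx_equiv t0 s1.
Proof.
  intros H0 H1 Heq [Hnv Hi].
  destruct (ctx_equiv_normal_match t0 t1 H0 H1 Heq Hi) as [s1 [[Hs Hsi] [Hiff Hs1]]].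
  exists s1; unfold stuck; tauto.
Qed.

Lemma equiv_env_beta E b0 b1 v0 v1 : equiv_env E -> E (Lam b0) (Lam b1) ->
  is_value v0 -> is_value v1 -> tilde E v0 v1 ->
  trip ctx_equiv_envrel E (inst b0 v0) (inst b1 v1).
Proof.
  intros [HenvE HeqE] HE Hv0 Hv1 [Hvv [Cv0 Cv1]].
  destruct (HenvE _ _ HE) as [Cb0 [Cb1 _]].
  assert (Hr : ctx_equiv (App (Lam b0) v0) (App (Lam b1) v1))
    by (apply (tclos_ctx_equiv E HeqE), tc_app; [apply tc_base |]; assumption).
  destruct (ctx_equiv_reducts (App (Lam b0) v0) (App (Lam b1) v1) _ _
              (conj Cb0 Cv0) (conj Cb1 Cv1) Hr
              (step_beta EHole b0 v0 Hv0) (step_beta EHole b1 v1 Hv1)) as [C0 [C1 Hres]].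
  split; [split; assumption | auto].
Qed.

Lemma equiv_env_shift E E0 E1 t0 t1 E0' E1' : equiv_env E -> pure E0 -> pure E1 ->
  E (eplug E0 (Shift t0)) (eplug E1 (Shift t1)) ->
  pure E0' -> pure E1' -> hat E E0' E1' ->
  trip ctx_equiv_envrel E (Reset (inst t0 (cont2 E0' E0))) (Reset (inst t1 (cont2 E1' E1))).
Proof.
  intros [HenvE HeqE] HP0 HP1 HE HP0' HP1' Hhat.
  destruct (HenvE _ _ HE) as [Cs0 [Cs1 _]].
  destruct (hat_closedF _ _ _ Hhat) as [CF0 CF1].
  assert (Hr : ctx_equiv (Reset (eplug (ecomp E0' E0) (Shift t0)))
                         (Reset (eplug (ecomp E1' E1) (Shift t1)))).
  { rewrite !eplug_ecomp.
    apply (tclos_ctx_equiv E HeqE), tc_reset, (hat_tclos E); [assumption | apply tc_base, HE]. }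
  assert (Cr0 : closed (Reset (eplug (ecomp E0' E0) (Shift t0))))
    by (rewrite eplug_ecomp; apply closed_at_eplug; auto).
  assert (Cr1 : closed (Reset (eplug (ecomp E1' E1) (Shift t1))))
    by (rewrite eplug_ecomp; apply closed_at_eplug; auto).
  rewrite <- !cont_ecomp.
  destruct (ctx_equiv_reducts _ _ _ _ Cr0 Cr1 Hr
              (step_shift EHole _ t0 (pure_ecomp _ _ HP0' HP0))
              (step_shift EHole _ t1 (pure_ecomp _ _ HP1' HP1))) as [C0 [C1 Hres]].
  split; [split; assumption | auto].
Qed.

Lemma ctx_equiv_envrel_bisim : env_bisim ctx_equiv_envrel.
Proof.
  split; [| split].
  - split; simpl; [intros E [HE _] | intros E t0 t1 [[HE _] [H0 [H1 _]]]]; auto.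
  - intros E t0 t1 [HE [H0 [H1 Heq]]]; simpl.
    pose proof (ctx_equiv_sym _ _ Heq) as Heq'.
    repeat split.
    + intros t0' Hs. exists t1; split; [constructor |].
      destruct (ctx_equiv_step_l t0 t1 t0' H0 Heq Hs); auto.
    + intros Hv. destruct (ctx_equiv_value_match t0 t1 H0 H1 Heq Hv) as [v1 [Hs [Hv1 [Hc He]]]].
      exists v1; split; [| split]; auto. apply equiv_env_add; auto.
    + intros Hst. destruct (ctx_equiv_stuck_match t0 t1 H0 H1 Heq Hst) as [s1 [Hs [Hs1 [Hc He]]]].
      exists s1; split; [| split]; auto. apply equiv_env_add; auto.
    + intros t1' Hs. exists t0; split; [constructor |].
      destruct (ctx_equiv_step_l t1 t0 t1' H1 Heq' Hs); auto using ctx_equiv_sym.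
    + intros Hv. destruct (ctx_equiv_value_match t1 t0 H1 H0 Heq' Hv) as [v0 [Hs [Hv0 [Hc He]]]].
      exists v0; split; [| split]; auto. apply equiv_env_add; auto using ctx_equiv_sym.
    + intros Hst. destruct (ctx_equiv_stuck_match t1 t0 H1 H0 Heq' Hst) as [s0 [Hs [Hs0 [Hc He]]]].
      exists s0; split; [| split]; auto. apply equiv_env_add; auto using ctx_equiv_sym.
  - intros E HE; split; intros; [eapply equiv_env_beta | eapply equiv_env_shift]; eauto.
Qed.

Theorem theorem1 : forall t0 t1 : term,
  closed t0 -> closed t1 -> ctx_equiv t0 t1 -> bisimilar empty_rel t0 t1.
Proof.
  intros t0 t1 H0 H1 Heq. exists ctx_equiv_envrel.
  split; [exact ctx_equiv_envrel_bisim |].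
  split; [split; intros a b [] | auto].
Qed.
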